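(* Let $K$ be a compact Hausdorff space and let $(f_n)_{n\in\mathbb{N}}$ be a pairwise disjoint sequence in $C_1(K)$. Suppose there exists a closed set $L\subseteq K$ such that $supp(f_n)\subseteq L$ for all $n\in\mathbb{N}$. Then $$K((f_n)_{n\in\mathbb{N}})=L((f_n|L)_{n\in\mathbb{N}})\cup\left(\overline{K\setminus L}\right)\times\{0\},$$ where $L((f_n|L)_{n\in\mathbb{N}})\subseteq L\times[0,1]$ is regarded as a subset of $K\times[0,1]$.
   Context: All spaces are Hausdorff. For a compact space $K$, $C_1(K)$ denotes the set of continuous functions $K\to[0,1]$; $f,g$ are disjoint if $f\cdot g=0$. For a real function $f$ on $K$, $supp(f)$ is the closure of $\{x\in K: f(x)\neq 0\}$. For a pairwise disjoint sequence $(f_n)_{n\in\mathbb{N}}$ in $C_1(K)$, let $D((f_n)_{n\in\mathbb{N}})$ be the union of all open sets $U\subseteq K$ such that $\{n: U\cap supp(f_n)\neq\emptyset\}$ is finite. The extension of $K$ by $(f_n)_{n\in\mathbb{N}}$, denoted $K((f_n)_{n\in\mathbb{N}})$, is the closure in $K\times[0,1]$ of the graph of the function $\sum_{n\in\mathbb{N}} f_n$ restricted to $D((f_n)_{n\in\mathbb{N}})$. *)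

From HB Require Import structures.
From mathcomp Require Import all_boot all_order all_algebra.
From mathcomp Require Import all_classical all_reals all_analysis.
Set Implicit Arguments. Unset Strict Implicit. Unset Printing Implicit Defensive.
Import Order.TTheory GRing.Theory Num.Theory numFieldNormedType.Exports.
Local Open Scope classical_set_scope.
Local Open Scope ring_scope.

Section Ext.
Context {R : realType} {T : topologicalType}.

Definition in_C1 (f : T -> R) : Prop :=
  continuous f /\ (forall x, 0 <= f x <= 1).

Definition disjoint_seq (f : nat -> T -> R) : Prop :=
  forall n m, n <> m -> forall x, f n x * f m x = 0.

(* support of g relative to the subspace A (closure taken in A) of g|A;
   for A = setT this is the usual support *)
Definition supp_in (A : set T) (g : T -> R) : set T :=
  A `&` closure [set x | A x /\ g x != 0].

Definition supp (g : T -> R) : set T := closure [set x | g x != 0].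

(* D((f_n|A)_n) computed in the space A: union of relatively open U of A
   meeting only finitely many supports *)
Definition Dset_in (A : set T) (f : nat -> T -> R) : set T :=
  [set x | exists U : set T, [/\ (exists V, open V /\ U = V `&` A), U x &
     finite_set [set n | U `&` supp_in A (f n) !=set0] ] ].

Definition sumf (f : nat -> T -> R) (x : T) : R := limn (series (fun n => f n x)).

(* A((f_n|A)_n): closure in A x [0,1] of the graph of sum f_n on D *)
Definition ext_in (A : set T) (f : nat -> T -> R) : set (T * R) :=
  [set p | (A p.1 /\ 0 <= p.2 <= 1) /\
     closure [set q | Dset_in A f q.1 /\ q.2 = sumf f q.1] p].

Definition ext (f : nat -> T -> R) : set (T * R) := ext_in setT f.

End Ext.

From HB Require Import structures.
From mathcomp Require Import all_boot all_order all_algebra.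
From mathcomp Require Import all_classical all_reals all_analysis.
Import Order.TTheory GRing.Theory Num.Theory numFieldNormedType.Exports.
Local Open Scope classical_set_scope.
Local Open Scope ring_scope.

(* Outside L every f_n vanishes, so the complement of L is an open set meeting
   no support: the graph of sum f_n on D((f_n)_n) is the graph over D((f_n|L)_n)
   together with (K \ L) x {0}.  Taking closures, the first piece stays inside
   the closed set L x [0,1] and the second becomes closure(K \ L) x {0}. *)

Lemma closure_setX1 {T U : topologicalType} (A : set T) (b : U) :
  closed [set b] -> closure (A `*` [set b]) = closure A `*` [set b].
Proof.
move=> clb; apply/seteqP; split.
  have clAb : closed (fst @^-1` closure A `&` snd @^-1` [set b]).
    apply: closedI; apply: (proj1 (continuous_closedP _)) => //.
    - by move=> p; exact: cvg_fst.
    - exact: closed_closure.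
    - by move=> p; exact: cvg_snd.
  rewrite [X in _ `<=` X](closure_id _).1 //; apply: closureS.
  by move=> p [Ap bp]; split => //; exact: subset_closure.
move=> [a c] [/= clAa ->] B [[A1 A2] /= [nA1 nA2] A12B].
have [y [Ay A1y]] := clAa A1 nA1.
by exists (y, b); split => //; apply: A12B; split => //; exact: nbhs_singleton.
Qed.

Definition graph_on {R : realType} {T : topologicalType}
    (A : set T) (f : nat -> T -> R) : set (T * R) :=
  [set q | Dset_in A f q.1 /\ q.2 = sumf f q.1].

Lemma Dset_in_sub {R : realType} {T : topologicalType}
    (A : set T) (f : nat -> T -> R) : Dset_in A f `<=` A.
Proof. by move=> x [_ [[V [_ ->]] [] _]]. Qed.

Lemma closure_graph_on_sub {R : realType} {T : topologicalType}
    (A : set T) (f : nat -> T -> R) :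
  closed A -> closure (graph_on A f) `<=` fst @^-1` A.
Proof.
move=> clA; have clfA : closed (fst @^-1` A : set (T * R)).
  by apply: (proj1 (continuous_closedP _)) => // p; exact: cvg_fst.
rewrite [X in _ `<=` X](closure_id _).1 //; apply: closureS.
by move=> q [/Dset_in_sub].
Qed.

Section SupportsInL.
Context {R : realType} {T : topologicalType}.
Variables (f : nat -> T -> R) (L : set T).
Hypothesis hL : closed L.
Hypothesis hsupp : forall n, supp (f n) `<=` L.

Lemma f_eq0_notin n x : ~ L x -> f n x = 0.
Proof.
move=> nLx; apply/eqP; apply: contrapT => /negP fx_neq0.
by apply: nLx; apply: (hsupp n); exact: subset_closure.
Qed.

Lemma sumf_eq0_notin x : ~ L x -> sumf f x = 0.
Proof.
move=> nLx; rewrite /sumf (_ : series _ = fun=> 0) ?lim_cst //.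
by apply/funext => n; apply: big1 => k _; exact: f_eq0_notin.
Qed.

Lemma supp_in_supp (A : set T) n : L `<=` A -> supp_in A (f n) = A `&` supp (f n).
Proof.
move=> LA; rewrite /supp_in /supp; congr (_ `&` closure _).
apply/seteqP; split => x /=; first by case.
move=> fx_neq0; split => //; apply: LA; apply: (hsupp n).
exact: subset_closure.
Qed.

Lemma Dset_in_L_setT : Dset_in L f `<=` Dset_in setT f.
Proof.
move=> x [_ [[V [oV ->]] [Vx _] fin]].
exists V; split => //; first by exists V; rewrite setIT.
apply: sub_finite_set fin => n /= [y [Vy]].
rewrite !supp_in_supp // => -[_ fny].
by exists y; split; split => //; exact: hsupp fny.
Qed.

Lemma Dset_in_setT_L x : L x -> Dset_in setT f x -> Dset_in L f x.
Proof.
move=> Lx [_ [[V [oV ->]] [Vx _] fin]].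
exists (V `&` L); split => //; first by exists V.
apply: sub_finite_set fin => n /= [y [[Vy Ly]]].
by rewrite !supp_in_supp // => -[_ fny]; exists y.
Qed.

Lemma Dset_in_setT_notin x : ~ L x -> Dset_in setT f x.
Proof.
move=> nLx; exists (~` L); split => //.
  by exists (~` L); rewrite setIT; split => //; exact: closed_openC.
rewrite (_ : [set n | _] = set0); first exact: finite_set0.
apply/seteqP; split => n //= [y [nLy]].
by rewrite supp_in_supp // => -[_ /hsupp].
Qed.

Lemma graph_on_setT :
  graph_on setT f = graph_on L f `|` (~` L) `*` [set 0].
Proof.
apply/seteqP; split => -[x r] /=.
  move=> [Dx /= ->]; have [Lx|nLx] := pselect (L x).
    by left; split => //; exact: Dset_in_setT_L.
  by right; split => //; exact: sumf_eq0_notin.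
move=> [[Dx /= ->]|[nLx /= ->]]; first by split => //; exact: Dset_in_L_setT.
by split; [exact: Dset_in_setT_notin | rewrite sumf_eq0_notin].
Qed.

End SupportsInL.

Theorem lemma4p3 (R : realType) (K : topologicalType)
  (hK : compact [set: K]) (hH : hausdorff_space K)
  (f : nat -> K -> R) (hf : forall n, in_C1 (f n)) (hdisj : disjoint_seq f)
  (L : set K) (hL : closed L) (hsupp : forall n, supp (f n) `<=` L) :
  ext f = ext_in L f `|` (closure (~` L)) `*` [set (0 : R)].
Proof.
rewrite /ext /ext_in -/(graph_on [set: K] f) -/(graph_on L f).
rewrite (graph_on_setT f L hL hsupp) closureU.
rewrite closure_setX1; last exact: closed_eq.
apply/seteqP; split => -[x r] /=.
  move=> [[_ r01] [clLxr|[clx r0]]]; last by right.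
  by left; split => //; split => //; exact: closure_graph_on_sub clLxr.
move=> [[[_ r01] clLxr]|[clx ->]]; first by split => //; left.
by split; [split; rewrite // lexx ler01 | right].
Qed.
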